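(* Consider the fading dirty paper channel over $\mathbb F_q$: at each channel use $\tau$ the receiver observes $(Y^{(\tau)},G^{(\tau)})$ with $Y^{(\tau)}=X^{(\tau)}+G^{(\tau)}\Theta^{(\tau)}$, where $X^{(\tau)}\in\mathbb F_q$ is the transmitted symbol, and $\Theta^{(\tau)},G^{(\tau)}$ are independent, uniform on $\mathbb F_q$, i.i.d. across channel uses and independent of the message; the whole sequence $\Theta^{[n]}$ is known to the transmitter in advance (non-causally) but not to the receiver, and $G^{[n]}$ is known to the receiver but not to the transmitter. Then the NS-assisted capacity is $C^{\mathrm{NS}}=\log_2 q$, while the classical capacity satisfies $C=o_q(\log_2 q)$, i.e. $C/\log_2q\to0$ as $q\to\infty$. In particular $C^{\mathrm{NS}}/C$ is unbounded as $q\to\infty$.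
   Context: A message $W$ is uniform on a finite set $\mathcal M$. A classical scheme over $n$ uses: a stochastic encoder $X^{[n]}=\phi(W,\Theta^{[n]})$ and stochastic decoder $\hat W=\psi(Y^{[n]},G^{[n]})$. A bipartite non-signaling (NS) box is a conditional pmf $\mathcal Z(u,v\mid s,t)$ (finite output alphabets) such that the marginal of $u$ does not depend on $t$ and the marginal of $v$ does not depend on $s$. An NS-assisted scheme: the transmitter inputs $(W,\Theta^{[n]})$ to the box and obtains $X^{[n]}$, the receiver inputs $(Y^{[n]},G^{[n]})$ and obtains $\hat W$. A rate $R$ is achievable if some sequence of schemes has $\Pr(\hat W\ne W)\to0$ and $\lim\frac1n\log_2|\mathcal M^{(n)}|\ge R$; the capacity is the supremum of achievable rates. *)

From HB Require Import structures.
From mathcomp Require Import all_boot all_order all_algebra.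
From mathcomp Require Import all_classical all_reals.
From mathcomp Require Import topology normedtype sequences exp.
Import numFieldNormedType.Exports.

Set Implicit Arguments.
Unset Strict Implicit.
Unset Printing Implicit Defensive.

Import Order.TTheory GRing.Theory Num.Theory.
Local Open Scope ring_scope.
Local Open Scope classical_set_scope.

Section FadingDPC.
Variables (R : realType) (F : finFieldType) (n m : nat).

Definition blk := {ffun 'I_n -> F}.

Definition chan_out (x g th : blk) : blk := [ffun i => x i + g i * th i].

Definition log2 (x : R) : R := ln x / ln 2.

(* classical scheme: stochastic encoder P(x^n | w, theta^n),
   stochastic decoder P(w_hat | y^n, g^n); message set 'I_m *)
Record cscheme := CScheme {
  enc : 'I_m -> blk -> blk -> R;   (* enc w th x *)
  dec : blk -> blk -> 'I_m -> R;   (* dec y g w_hat *)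
  enc_ge0 : forall w th x, 0 <= enc w th x;
  enc_sum1 : forall w th, \sum_(x : blk) enc w th x = 1;
  dec_ge0 : forall y g v, 0 <= dec y g v;
  dec_sum1 : forall y g, \sum_(v : 'I_m) dec y g v = 1 }.

(* error probability: W uniform on 'I_m, Theta^n and G^n i.i.d. uniform *)
Definition cerr (S : cscheme) : R :=
  (m%:R * (#|F| ^ (2 * n))%:R)^-1 *
  \sum_(w : 'I_m) \sum_(th : blk) \sum_(g : blk) \sum_(x : blk)
    \sum_(v : 'I_m | v != w) enc S w th x * dec S (chan_out x g th) g v.

(* bipartite non-signaling box Z(u, v | s, t) with
   s = (W, Theta^n), t = (Y^n, G^n), u = X^n, v = W_hat *)
Record nsbox := NSBox {
  box : ('I_m * blk) -> (blk * blk) -> blk -> 'I_m -> R;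
  box_ge0 : forall s t u v, 0 <= box s t u v;
  box_sum1 : forall s t, \sum_(u : blk) \sum_(v : 'I_m) box s t u v = 1;
  box_ns_u : forall s t t' u,
      \sum_(v : 'I_m) box s t u v = \sum_(v : 'I_m) box s t' u v;
  box_ns_v : forall s s' t v,
      \sum_(u : blk) box s t u v = \sum_(u : blk) box s' t u v }.

Definition nserr (Z : nsbox) : R :=
  (m%:R * (#|F| ^ (2 * n))%:R)^-1 *
  \sum_(w : 'I_m) \sum_(th : blk) \sum_(g : blk) \sum_(x : blk)
    \sum_(v : 'I_m | v != w) box Z (w, th) (chan_out x g th, g) x v.

End FadingDPC.

Arguments blk F n : clear implicits.

Definition rate {R : realType} (n m : nat) : R := log2 (m%:R : R) / n%:R.

Definition c_achievable (R : realType) (F : finFieldType) (r : R) : Prop :=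
  exists (m : nat -> nat) (S : forall n, cscheme R F n (m n)),
    (forall n, (0 < m n)%N) /\
    ((fun n => cerr (S n)) @ \oo --> (0 : R)) /\
    exists l : R, ((fun n => rate n (m n) : R) @ \oo --> l) /\ r <= l.

Definition ns_achievable (R : realType) (F : finFieldType) (r : R) : Prop :=
  exists (m : nat -> nat) (Z : forall n, nsbox R F n (m n)),
    (forall n, (0 < m n)%N) /\
    ((fun n => nserr (Z n)) @ \oo --> (0 : R)) /\
    exists l : R, ((fun n => rate n (m n) : R) @ \oo --> l) /\ r <= l.

Definition capacity (R : realType) (F : finFieldType) : R :=
  sup [set r : R | c_achievable F r].

Definition ns_capacity (R : realType) (F : finFieldType) : R :=
  sup [set r : R | ns_achievable F r].

From HB Require Import structures.
From mathcomp Require Import all_boot all_order all_algebra.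
From mathcomp Require Import all_classical all_reals.
From mathcomp Require Import topology normedtype sequences exp.
From mathcomp Require Import ring lra.
Import numFieldNormedType.Exports.
Import Order.TTheory GRing.Theory Num.Theory.
Local Open Scope ring_scope.
Local Open Scope classical_set_scope.

(* With non-signaling assistance the box draws X^n uniformly and hands the
   receiver W + Y - X - G Theta, which is W whatever the channel state, so
   log2 q bits per use are decoded without error. Conversely, the receiver's
   marginal of any non-signaling box is independent of the transmitter's input,
   so the success probability times the number of messages is at most q^n.

   Without assistance, write the success mass as a sum over (w, g, y) of
   dec(w | y, g) P(y | w, g) and apply Cauchy-Schwarz. The decoder factor is at
   most q^(2n). The encoder factor is a collision sum, and the channel outputs
   of inputs (x, theta) and (x', theta') coincide at a coordinate for at most
   one fading value unless theta and theta' agree there; this bounds the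
   collision sum by q^n (2q)^n. Hence (success probability)^2 times the number
   of messages is at most 2^n, so C <= 1 while C^NS = log2 q. *)

Section Log2.
Context {R : realType}.

Lemma log2_2 : log2 (2 : R) = 1.
Proof. by rewrite /log2 divff // gt_eqF // ln_gt0 // ltr1n. Qed.

Lemma log2M (x y : R) : 0 < x -> 0 < y -> log2 (x * y) = log2 x + log2 y.
Proof. by move=> x0 y0; rewrite /log2 lnM ?posrE // mulrDl. Qed.

Lemma log2X (x : R) k : 0 < x -> log2 (x ^+ k) = log2 x *+ k.
Proof. by move=> x0; rewrite /log2 lnXn // mulrnAl. Qed.

Lemma ler_log2 (x y : R) : 0 < x -> x <= y -> log2 x <= log2 y.
Proof.
move=> x0 xy; rewrite /log2 ler_pM2r; last by rewrite invr_gt0 ln_gt0 // ltr1n.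
by rewrite ler_ln // posrE (lt_le_trans x0 xy).
Qed.

Lemma log2_natr_unbounded (x : R) :
  exists Q : nat, forall N : nat, (Q <= N)%N -> x <= log2 N%:R.
Proof.
exists (2 ^ Num.bound `|x|)%N => N QN.
have log2Q : log2 (2 ^ Num.bound `|x|)%:R = (Num.bound `|x|)%:R :> R.
  by rewrite natrX log2X // log2_2.
apply: (le_trans (ler_norm x)); apply: ltW.
apply: (lt_le_trans (archi_boundP (normr_ge0 x))).
by rewrite -log2Q ler_log2 ?ler_nat // ltr0n expn_gt0.
Qed.

End Log2.

Section Rates.
Context {R : realType}.

Lemma log2_le_of_success {k n M : nat} {c e : R} : 0 < c -> (0 < M)%N ->
  `|e| <= 2^-1 -> (1 - e) ^+ k * M%:R <= c ^+ n ->
  log2 M%:R <= k%:R + log2 c *+ n.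
Proof.
move=> c_gt0 M_gt0 e_small success_le.
have half_le : 2^-1 <= 1 - e by move: e_small; rewrite ler_norml => /andP[_]; lra.
have M_le : M%:R <= 2 ^+ k * c ^+ n.
  rewrite -ler_pdivrMl ?exprn_gt0 // -exprVn.
  apply: (le_trans _ success_le); rewrite ler_wpM2r // lerXn2r ?nnegrE //; lra.
have M_pos : 0 < M%:R :> R by rewrite ltr0n.
apply: le_trans (ler_log2 _ _ M_pos M_le) _.
by rewrite log2M ?exprn_gt0 // !log2X // log2_2.
Qed.

Lemma rate_limit_le {k : nat} {c l : R} {M : nat -> nat} {err : nat -> R} :
  0 < c -> (forall n, 0 < M n)%N -> err @ \oo --> 0 ->
  (fun n => rate n (M n) : R) @ \oo --> l ->
  (forall n, (1 - err n) ^+ k * (M n)%:R <= c ^+ n) -> l <= log2 c.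
Proof.
move=> c_gt0 M_gt0 err_cvg rate_cvg success_le.
apply/ler_addgt0Pr => d d_gt0; apply: (cvgr_to_le rate_cvg); near=> n.
have n_large : (k%:R + 1) / d <= n%:R by near: n; exact: nbhs_infty_ger.
have n_gt0 : 0 < n%:R :> R by apply: lt_le_trans n_large; rewrite divr_gt0 // ltr_wpDl.
have err_small : `|err n| <= 2^-1.
  by near: n; apply: cvgr0_norm_le; rewrite // invr_gt0.
have := log2_le_of_success c_gt0 (M_gt0 n) err_small (success_le n).
rewrite /rate (ler_pdivrMr _ _ n_gt0) -mulr_natr => log2M_le.
rewrite ler_pdivrMr // in n_large; nra.
Unshelve. all: by end_near.
Qed.

End Rates.

Section FiniteSums.
Context {R : realDomainType}.

Lemma ler_sum_term {I : finType} (f : I -> R) j :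
  (forall i, 0 <= f i) -> f j <= \sum_i f i.
Proof. by move=> f_ge0; rewrite (bigD1 j) //= lerDl sumr_ge0. Qed.

Lemma sum_indicator {T : finType} (a : T) : \sum_y ((y == a)%:R : R) = 1.
Proof.
by rewrite (bigD1 a) //= eqxx big1 ?addr0 // => y /negbTE->.
Qed.

Lemma sum_indicatorM {T : finType} (a : T) (f : T -> R) :
  \sum_y (a == y)%:R * f y = f a.
Proof.
rewrite (bigD1 a) //= eqxx mul1r big1 ?addr0 // => y ya.
by rewrite eq_sym (negbTE ya) mul0r.
Qed.

Lemma natr_eq_ffun (I T : finType) (f1 f2 : {ffun I -> T}) :
  ((f1 == f2)%:R : R) = \prod_i (f1 i == f2 i)%:R.
Proof.
have [->|ne] := eqVneq f1 f2; first by rewrite big1 // => i _; rewrite eqxx.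
have [i /negbTE f12i] : exists i, f1 i != f2 i.
  by apply/existsP; rewrite -negb_forall; apply: contra ne => /forallP h;
    apply/eqP/ffunP => i; apply/eqP.
by rewrite (bigD1 i) //= f12i mul0r.
Qed.

Lemma cauchy_schwarz_sum {I : finType} (a b : I -> R) :
  (\sum_i a i * b i) ^+ 2 <= (\sum_i a i ^+ 2) * (\sum_i b i ^+ 2).
Proof.
have : 0 <= \sum_i \sum_j (a i * b j - a j * b i) ^+ 2.
  by do 2!(apply: sumr_ge0 => ? _); exact: sqr_ge0.
have -> : \sum_i \sum_j (a i * b j - a j * b i) ^+ 2 =
    2 * ((\sum_i a i ^+ 2) * (\sum_i b i ^+ 2) - (\sum_i a i * b i) ^+ 2).
  have expand i j : (a i * b j - a j * b i) ^+ 2 =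
      a i ^+ 2 * b j ^+ 2 + a j ^+ 2 * b i ^+ 2 - 2 * (a i * b i) * (a j * b j).
    by ring.
  under eq_bigr do under eq_bigr do rewrite expand.
  under eq_bigr do rewrite sumrB big_split /= -mulr_sumr -mulr_suml -mulr_sumr.
  rewrite sumrB big_split /= -mulr_suml -mulr_sumr -mulr_suml -mulr_sumr; ring.
by move=> gap_ge0; lra.
Qed.

Lemma sum_fiber_sqr (P Y : finType) (a : P -> R) (f : P -> Y) :
  \sum_y (\sum_p a p * (f p == y)%:R) ^+ 2 =
  \sum_p \sum_p' a p * a p' * (f p == f p')%:R.
Proof.
transitivity (\sum_y \sum_p \sum_p' a p * a p' * ((f p == y)%:R * (f p' == y)%:R)).
  apply: eq_bigr => y _; rewrite expr2 mulr_suml; apply: eq_bigr => p _.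
  by rewrite mulr_sumr; apply: eq_bigr => p' _; ring.
rewrite exchange_big; apply: eq_bigr => p _.
rewrite exchange_big; apply: eq_bigr => p' _.
by rewrite -mulr_sumr sum_indicatorM eq_sym.
Qed.

End FiniteSums.

Lemma card_finField_gt0 (F : finFieldType) : (0 < #|F|)%N.
Proof. by apply/card_gt0P; exists 0. Qed.

Lemma card_blk_gt0 (F : finFieldType) n : (0 < #|blk F n|)%N.
Proof. by rewrite card_ffun card_ord expn_gt0 card_finField_gt0. Qed.

Lemma natr_card_blk (R : nzSemiRingType) (F : finFieldType) n :
  (#|blk F n|%:R : R) = #|F|%:R ^+ n.
Proof. by rewrite card_ffun card_ord natrX. Qed.

Lemma sumr_const_card (R : nzSemiRingType) (T : finType) (c : R) :
  \sum_(i : T) c = #|T|%:R * c.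
Proof. by rewrite sumr_const mulr_natl. Qed.

Section ErrorProbability.
Context {R : realFieldType} {F : finFieldType} {n m : nat}.
Local Notation B := (blk F n).
Local Notation q := (#|F|%:R : R).
Variable P : 'I_m -> B -> B -> B -> 'I_m -> R.
Hypothesis P_sum1 : forall w th g, \sum_x \sum_v P w th g x v = 1.

Definition success_mass : R :=
  \sum_w \sum_(th : B) \sum_(g : B) \sum_(x : B) P w th g x w.

Lemma error_mass_eq :
  \sum_w \sum_(th : B) \sum_(g : B) \sum_(x : B) \sum_(v | v != w) P w th g x v =
  m%:R * (q ^+ n) ^+ 2 - success_mass.
Proof.
have inner w th g : \sum_x \sum_(v | v != w) P w th g x v =
    1 - \sum_x P w th g x w.
  rewrite -(P_sum1 w th g) -sumrB; apply: eq_bigr => x _.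
  by rewrite [X in _ = X - _](bigD1 w) //= addrC addrK.
have -> : m%:R * (q ^+ n) ^+ 2 = \sum_(w : 'I_m) \sum_(th : B) \sum_(g : B) 1.
  by rewrite !sumr_const_card natr_card_blk card_ord mulr1 expr2.
rewrite -sumrB; apply: eq_bigr => w _; rewrite -sumrB; apply: eq_bigr => th _.
by rewrite -sumrB; apply: eq_bigr => g _; exact: inner.
Qed.

Lemma one_sub_error_mul : (0 < m)%N ->
  (1 - (m%:R * (#|F| ^ (2 * n))%:R)^-1 *
     \sum_w \sum_(th : B) \sum_(g : B) \sum_(x : B) \sum_(v | v != w) P w th g x v)
  * m%:R * (q ^+ n) ^+ 2 = success_mass.
Proof.
move=> m_gt0; have q_gt0 : 0 < q by rewrite ltr0n card_finField_gt0.
have -> : (#|F| ^ (2 * n))%:R = (q ^+ n) ^+ 2 :> R by rewrite -exprM mulnC natrX.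
rewrite error_mass_eq; field.
by rewrite expf_neq0 ?lt0r_neq0 // ltr0n.
Qed.

End ErrorProbability.

Section NonSignalingConverse.
Variables (R : realType) (F : finFieldType) (n m : nat).
Local Notation B := (blk F n).
Local Notation q := (#|F|%:R : R).
Variable Z : nsbox R F n m.

Lemma nsbox_sum_diag (s : 'I_m -> 'I_m * B) t : (0 < m)%N ->
  \sum_v \sum_u box Z (s v) t u v = 1.
Proof.
move=> m_gt0; rewrite -(box_sum1 Z (s (Ordinal m_gt0)) t) [RHS]exchange_big.
by apply: eq_bigr => v _; exact: box_ns_v.
Qed.

Let P w th g x v := box Z (w, th) (chan_out x g th, g) x v.

Lemma nsbox_success_mass_le : (0 < m)%N -> success_mass P <= (q ^+ n) ^+ 3.
Proof.
move=> m_gt0.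
apply: (@le_trans _ _ (\sum_w \sum_(th : B) \sum_(g : B) \sum_(x : B) \sum_(u : B)
    box Z (w, th) (chan_out x g th, g) u w)).
  do 4!(apply: ler_sum => ? _).
  exact: (ler_sum_term (fun u => box Z _ _ u _) _ (fun u => box_ge0 Z _ _ u _)).
rewrite exchange_big; under eq_bigr do rewrite exchange_big.
under eq_bigr do under eq_bigr do rewrite exchange_big.
under eq_bigr do under eq_bigr do under eq_bigr do
  rewrite (nsbox_sum_diag (fun w => (w, _))) //.
by rewrite !sumr_const_card natr_card_blk mulr1 !exprS expr0 mulr1.
Qed.

Lemma nsbox_success_le : (0 < m)%N -> (1 - nserr Z) * m%:R <= q ^+ n.
Proof.
move=> m_gt0.
have P_sum1 w th g : \sum_x \sum_v P w th g x v = 1.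
  by under eq_bigr do rewrite (box_ns_u Z _ _ (th, g)); exact: box_sum1.
have qn_gt0 : 0 < q ^+ n by rewrite exprn_gt0 // ltr0n card_finField_gt0.
rewrite -(ler_pM2r (exprn_gt0 2 qn_gt0)).
rewrite [_ * _ * _](one_sub_error_mul P P_sum1 m_gt0) -exprS.
exact: nsbox_success_mass_le.
Qed.

End NonSignalingConverse.

Section NonSignalingAchievability.
Variables (R : realType) (F : finFieldType) (n : nat).
Local Notation B := (blk F n).
Local Notation N := #|B|.

Lemma enum_val_eq (v : 'I_N) (b : B) : (enum_val v == b) = (v == enum_rank b).
Proof. by apply/eqP/eqP => [<-|->]; [rewrite enum_valK | rewrite enum_rankK]. Qed.

(* Message v stands for the block enum_val v. *)
Definition dpc_kernel (s : 'I_N * B) (t : B * B) (x : B) (v : 'I_N) : R :=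
  N%:R^-1 *
  (enum_val v == [ffun i => enum_val s.1 i + t.1 i - x i - t.2 i * s.2 i])%:R.

Lemma dpc_kernel_ge0 s t x v : 0 <= dpc_kernel s t x v.
Proof. by rewrite mulr_ge0 ?invr_ge0. Qed.

Lemma dpc_kernel_sum_v s t x : \sum_v dpc_kernel s t x v = N%:R^-1.
Proof.
rewrite -mulr_sumr; under eq_bigr do rewrite enum_val_eq.
by rewrite sum_indicator mulr1.
Qed.

Lemma dpc_kernel_sum_u s t v : \sum_x dpc_kernel s t x v = N%:R^-1.
Proof.
rewrite -mulr_sumr.
have solve_x (x : B) :
    (enum_val v == [ffun i => enum_val s.1 i + t.1 i - x i - t.2 i * s.2 i]) =
    (x == [ffun i => enum_val s.1 i + t.1 i - t.2 i * s.2 i - enum_val v i]).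
  by apply/eqP/eqP => e; apply/ffunP => i; have := congr1 (fun f : B => f i) e;
    rewrite !ffunE => ->; ring.
under eq_bigr do rewrite solve_x.
by rewrite sum_indicator mulr1.
Qed.

Lemma dpc_kernel_sum1 s t : \sum_x \sum_v dpc_kernel s t x v = 1.
Proof.
under eq_bigr do rewrite dpc_kernel_sum_v.
by rewrite sumr_const_card mulfV // pnatr_eq0 -lt0n card_blk_gt0.
Qed.

Lemma dpc_kernel_ns_u s t t' x :
  \sum_v dpc_kernel s t x v = \sum_v dpc_kernel s t' x v.
Proof. by rewrite !dpc_kernel_sum_v. Qed.

Lemma dpc_kernel_ns_v s s' t v :
  \sum_x dpc_kernel s t x v = \sum_x dpc_kernel s' t x v.
Proof. by rewrite !dpc_kernel_sum_u. Qed.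

Definition dpc_box : nsbox R F n N :=
  NSBox dpc_kernel_ge0 dpc_kernel_sum1 dpc_kernel_ns_u dpc_kernel_ns_v.

Lemma dpc_box_err : nserr dpc_box = 0.
Proof.
rewrite /nserr big1 ?mulr0 // => w _; rewrite big1 // => th _.
rewrite big1 // => g _; rewrite big1 // => x _; rewrite big1 // => v vw /=.
rewrite /dpc_kernel /=.
have -> : [ffun i => enum_val w i + chan_out x g th i - x i - g i * th i] = enum_val w.
  by apply/ffunP => i; rewrite !ffunE; ring.
by rewrite enum_val_eq enum_valK (negbTE vw) mulr0.
Qed.

End NonSignalingAchievability.

Section TrivialScheme.
Variables (R : realType) (F : finFieldType) (n : nat).

Definition trivial_scheme : cscheme R F n 1 :=
  CScheme (fun w th x => ler0n _ (x == th)) (fun _ th => sum_indicator th)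
    (fun y g v => @ler01 R) (fun _ _ => big_ord1 _ (fun=> 1)).

Lemma trivial_scheme_err : cerr trivial_scheme = 0.
Proof.
rewrite /cerr big1 ?mulr0 // => w _; rewrite big1 // => th _.
rewrite big1 // => g _; rewrite big1 // => x _; rewrite big1 // => v.
by rewrite (ord1 v) (ord1 w) eqxx.
Qed.

End TrivialScheme.

Section FadingCollisions.
Context {R : realFieldType} {F : finFieldType} {n : nat}.
Local Notation B := (blk F n).
Local Notation q := (#|F|%:R : R).

Definition collision_weight (th th' : B) : R :=
  \prod_i (if th i == th' i then q else 1).

Lemma sum_affine_collision_le (x x' t t' : F) :
  \sum_a ((x + a * t == x' + a * t')%:R : R) <= if t == t' then q else 1.
Proof.
have [<-|tt'] := eqVneq t t'.
  rewrite -[leRHS]mulr1 -sumr_const_card; apply: ler_sum => a _.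
  by case: (_ == _); rewrite ?ler01.
have solve_a a : (x + a * t == x' + a * t') = (a == (x' - x) / (t - t')).
  have tt'0 : t - t' != 0 by rewrite subr_eq0.
  apply/eqP/eqP => [e|->]; last by field.
  have -> : x' = x + a * t - a * t' by rewrite e addrK.
  by field.
under eq_bigr do rewrite solve_a.
by rewrite sum_indicator.
Qed.

Lemma sum_chan_collision_le (x x' th th' : B) :
  \sum_(g : B) ((chan_out x g th == chan_out x' g th')%:R : R) <=
  collision_weight th th'.
Proof.
under eq_bigr => g _.
  rewrite natr_eq_ffun; under eq_bigr => i _ do rewrite !ffunE.
  over.
rewrite -(bigA_distr_bigA (fun i a => ((x i + a * th i == x' i + a * th' i)%:R : R))).
by apply: ler_prod => i _; rewrite sumr_ge0 ?sum_affine_collision_le.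
Qed.

Lemma sum_collision_weight_le (th : B) :
  \sum_(th' : B) collision_weight th th' <= (2 * q) ^+ n.
Proof.
rewrite -(bigA_distr_bigA (fun i a => if th i == a then q else 1)).
rewrite -[in leRHS](card_ord n) -prodr_const; apply: ler_prod => i _; apply/andP; split.
  by apply: sumr_ge0 => a _; case: ifP; rewrite ?ler0n ?ler01.
apply: (@le_trans _ _ (\sum_a (q * (a == th i)%:R + 1))).
  apply: ler_sum => a _; rewrite eq_sym.
  by case: (_ == _); rewrite ?mulr1 ?mulr0 ?add0r // lerDl ler01.
rewrite big_split /= -mulr_sumr sum_indicator sumr_const_card mulr1.
by rewrite mulrDl mul1r.
Qed.

End FadingCollisions.

Section ClassicalConverse.
Variables (R : realType) (F : finFieldType) (n m : nat).
Variable S : cscheme R F n m.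
Local Notation B := (blk F n).
Local Notation q := (#|F|%:R : R).

Definition output_mass (w : 'I_m) (g y : B) : R :=
  \sum_(p : B * B) enc S w p.1 p.2 * (chan_out p.2 g p.1 == y)%:R.

Let P w th g x v := enc S w th x * dec S (chan_out x g th) g v.

Lemma success_mass_output :
  success_mass P = \sum_w \sum_(g : B) \sum_(y : B) dec S y g w * output_mass w g y.
Proof.
apply: eq_bigr => w _; rewrite exchange_big; apply: eq_bigr => g _.
under [RHS]eq_bigr do rewrite /output_mass mulr_sumr.
rewrite [RHS]exchange_big [LHS]pair_bigA; apply: eq_bigr => -[th x] _ /=.
under eq_bigr => y _ do rewrite mulrCA [dec S y g w * _]mulrC.
by rewrite -mulr_sumr sum_indicatorM.
Qed.

Lemma dec_le1 y g v : dec S y g v <= 1.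
Proof.
rewrite -(dec_sum1 S y g).
exact: (ler_sum_term (dec S y g) v (dec_ge0 S y g)).
Qed.

Lemma sum_dec_sqr_le :
  \sum_w \sum_(g : B) \sum_(y : B) dec S y g w ^+ 2 <= (q ^+ n) ^+ 2.
Proof.
apply: (@le_trans _ _ (\sum_w \sum_(g : B) \sum_(y : B) dec S y g w)).
  do 3!(apply: ler_sum => ? _).
  by rewrite expr2 ler_piMr ?dec_ge0 ?dec_le1.
rewrite exchange_big; under eq_bigr do rewrite exchange_big.
under eq_bigr do under eq_bigr do rewrite dec_sum1.
by rewrite !sumr_const_card natr_card_blk mulr1 expr2.
Qed.

Lemma sum_output_mass_sqr_le w :
  \sum_(g : B) \sum_(y : B) output_mass w g y ^+ 2 <= q ^+ n * (2 * q) ^+ n.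
Proof.
under eq_bigr do rewrite sum_fiber_sqr.
rewrite exchange_big; under eq_bigr do rewrite exchange_big.
under eq_bigr do under eq_bigr do rewrite -mulr_sumr.
apply: (@le_trans _ _ (\sum_(p : B * B) \sum_(p' : B * B)
    enc S w p.1 p.2 * enc S w p'.1 p'.2 * collision_weight p.1 p'.1)).
  do 2!(apply: ler_sum => ? _).
  by rewrite ler_wpM2l ?mulr_ge0 ?enc_ge0 ?sum_chan_collision_le.
apply: (@le_trans _ _ (\sum_(p : B * B) enc S w p.1 p.2 * (2 * q) ^+ n)).
  apply: ler_sum => -[th x] _ /=.
  under eq_bigr do rewrite -mulrA.
  rewrite -mulr_sumr ler_wpM2l ?enc_ge0 //.
  rewrite -(pair_bigA _ (fun th' x' => enc S w th' x' * collision_weight th th')) /=.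
  under eq_bigr do rewrite -mulr_suml enc_sum1 mul1r.
  exact: sum_collision_weight_le.
rewrite -mulr_suml -(pair_bigA _ (enc S w)) /=.
under eq_bigr do rewrite enc_sum1.
by rewrite sumr_const_card natr_card_blk mulr1.
Qed.

Lemma cscheme_success_mass_sqr_le :
  success_mass P ^+ 2 <= 2 ^+ n * (m%:R * (q ^+ n) ^+ 4).
Proof.
have flatten (f : 'I_m -> B -> B -> R) :
    \sum_w \sum_(g : B) \sum_(y : B) f w g y =
    \sum_(p : 'I_m * (B * B)) f p.1 p.2.1 p.2.2.
  by under eq_bigr do rewrite pair_bigA; rewrite pair_bigA.
have -> : 2 ^+ n * (m%:R * (q ^+ n) ^+ 4) =
    (q ^+ n) ^+ 2 * (m%:R * (q ^+ n * (2 * q) ^+ n)) by rewrite exprMn; ring.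
rewrite success_mass_output flatten.
apply: le_trans (cauchy_schwarz_sum (fun p => dec S p.2.2 p.2.1 p.1)
  (fun p => output_mass p.1 p.2.1 p.2.2)) _.
rewrite -(flatten (fun w g y => dec S y g w ^+ 2)).
rewrite -(flatten (fun w g y => output_mass w g y ^+ 2)).
have output_le : \sum_w \sum_(g : B) \sum_(y : B) output_mass w g y ^+ 2 <=
    m%:R * (q ^+ n * (2 * q) ^+ n).
  rewrite -[m in m%:R](card_ord m) -sumr_const_card.
  by apply: ler_sum => w _; exact: sum_output_mass_sqr_le.
by apply: ler_pM sum_dec_sqr_le output_le;
  do 3!(apply: sumr_ge0 => ? _); exact: sqr_ge0.
Qed.

Lemma cscheme_success_le : (0 < m)%N -> (1 - cerr S) ^+ 2 * m%:R <= 2 ^+ n.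
Proof.
move=> m_gt0.
have P_sum1 w th g : \sum_x \sum_v P w th g x v = 1.
  by under eq_bigr do rewrite -mulr_sumr dec_sum1 mulr1; exact: enc_sum1.
have qn_gt0 : 0 < q ^+ n by rewrite exprn_gt0 // ltr0n card_finField_gt0.
have scale_gt0 : 0 < m%:R * (q ^+ n) ^+ 4 by rewrite mulr_gt0 ?ltr0n // exprn_gt0.
rewrite -(ler_pM2r scale_gt0).
have -> : (1 - cerr S) ^+ 2 * m%:R * (m%:R * (q ^+ n) ^+ 4) =
    ((1 - cerr S) * m%:R * (q ^+ n) ^+ 2) ^+ 2 by ring.
rewrite (one_sub_error_mul P P_sum1 m_gt0).
exact: cscheme_success_mass_sqr_le.
Qed.

End ClassicalConverse.

Lemma sup_eq_max (R : realType) (E : set R) x : E x -> ubound E x -> sup E = x.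
Proof.
move=> Ex ubx; apply/eqP; rewrite eq_le ge_sup //=; last by exists x.
by apply: ub_le_sup => //; exists x.
Qed.

Section Capacities.
Variables (R : realType) (F : finFieldType).
Local Notation q := (#|F|%:R : R).

Lemma ns_achievable_le (r : R) : ns_achievable F r -> r <= log2 q.
Proof.
move=> [M [Z [M_gt0 [err_cvg [l [rate_cvg r_le]]]]]].
apply: (le_trans r_le); apply: (rate_limit_le (k := 1) _ M_gt0 err_cvg rate_cvg).
  by rewrite ltr0n card_finField_gt0.
by move=> n; rewrite expr1; exact: nsbox_success_le.
Qed.

Lemma ns_achievable_log2_card : ns_achievable F (log2 q).
Proof.
exists (fun n => #|blk F n|), (fun n => dpc_box R F n).
split; first by move=> n; exact: card_blk_gt0.
split; first by under eq_fun do rewrite dpc_box_err; exact: cvg_cst.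
exists (log2 q); split => //; apply: cvg_near_cst; near=> n.
have n_gt0 : (0 < n)%N by near: n; exact: nbhs_infty_gt.
rewrite /rate natr_card_blk log2X ?ltr0n ?card_finField_gt0 // -[_ *+ n]mulr_natr.
by rewrite mulfK // pnatr_eq0 -lt0n.
Unshelve. all: by end_near.
Qed.

Lemma ns_capacityE : ns_capacity R F = log2 q.
Proof. exact: sup_eq_max ns_achievable_log2_card ns_achievable_le. Qed.

Lemma c_achievable0 : c_achievable F (0 : R).
Proof.
exists (fun _ => 1%N), (fun n => trivial_scheme R F n).
split => //; split; first by under eq_fun do rewrite trivial_scheme_err; exact: cvg_cst.
exists 0; split => //.
by under eq_fun do rewrite /rate /log2 ln1 !mul0r; exact: cvg_cst.
Qed.

Lemma c_achievable_le1 (r : R) : c_achievable F r -> r <= 1.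
Proof.
move=> [M [S [M_gt0 [err_cvg [l [rate_cvg r_le]]]]]].
apply: (le_trans r_le); rewrite -(@log2_2 R).
apply: (rate_limit_le (k := 2) _ M_gt0 err_cvg rate_cvg) => // n.
exact: cscheme_success_le.
Qed.

Lemma capacity_le1 : capacity R F <= 1.
Proof. by apply: ge_sup; [exists 0; exact: c_achievable0 | exact: c_achievable_le1]. Qed.

Lemma capacity_ge0 : 0 <= capacity R F.
Proof. by apply: ub_le_sup c_achievable0; exists 1; exact: c_achievable_le1. Qed.

End Capacities.

Theorem theorem10 (R : realType) :
  (forall F : finFieldType, ns_capacity R F = log2 (#|F|%:R : R)) /\
  (forall eps : R, 0 < eps -> exists Q : nat, forall F : finFieldType,
      (Q <= #|F|)%N -> capacity R F / log2 (#|F|%:R : R) <= eps) /\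
  (forall M : R, exists Q : nat, forall F : finFieldType,
      (Q <= #|F|)%N -> M * capacity R F <= ns_capacity R F).
Proof.
split; first exact: ns_capacityE.
split => [eps eps_gt0 | M].
  have [Q log2_ge] := log2_natr_unbounded (eps^-1 : R).
  exists Q => F /log2_ge inv_le_log2.
  have log2_gt0 : 0 < log2 (#|F|%:R : R).
    by apply: lt_le_trans inv_le_log2; rewrite invr_gt0.
  rewrite ler_pdivrMr // (le_trans (capacity_le1 R F)) //.
  by rewrite -ler_pdivrMl // mulr1.
have [Q log2_ge] := log2_natr_unbounded `|M|.
exists Q => F /log2_ge norm_le_log2.
rewrite ns_capacityE.
have := capacity_ge0 R F; have := capacity_le1 R F.
have := ler_norm M; have := normr_ge0 M.
nra.
Qed.
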